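(* Let $(R,\mathfrak m)$ be a Noetherian local ring of prime characteristic $p$ with $\operatorname{depth} R=0$, and let $L_\bullet$ be a complex of finitely generated free $R$-modules whose differentials, written as matrices with respect to bases, have all entries in $\mathfrak m$. Then for every integer $r$ with $r>\log_p c(R)$ and every integer $j$, $$H_j(L_\bullet\otimes_R {}^{\phi^r}\!R)=0 \iff L_j=0.$$ Consequently, if $M$ is a finitely generated $R$-module such that $\operatorname{Tor}^R_j(M,{}^{\phi^r}\!R)=0$ for some $j\ge 1$ and some $r>\log_p c(R)$, then $M$ is projective.
   Context: $\phi:R\to R$ denotes the Frobenius homomorphism $\phi(a)=a^p$. For $r\ge 1$, ${}^{\phi^r}\!R$ denotes the ring $R$ regarded as an $R$-module via $\phi^r$, i.e. $a\cdot b=a^{p^r}b$. For a local ring $(R,\mathfrak m)$ of depth zero, $c(R)$ is the smallest positive integer $s$ such that $(0:\mathfrak m)_R=\{x\in R\mid \mathfrak m x=0\}\not\subseteq \mathfrak m^s$ (such $s$ exists since $(0:\mathfrak m)_R\neq 0$ and by Krull's intersection theorem). *)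

From HB Require Import structures.
From mathcomp Require Import all_boot all_order all_algebra.
Set Implicit Arguments. Unset Strict Implicit. Unset Printing Implicit Defensive.
Import Order.TTheory GRing.Theory Num.Theory.
Local Open Scope ring_scope.

Section CommAlg.
Variable R : comUnitRingType.

Definition is_ideal (I : R -> Prop) : Prop :=
  [/\ I 0, (forall x y, I x -> I y -> I (x + y)) & (forall a x, I x -> I (a * x))].

Definition noetherian : Prop :=
  forall I : R -> Prop, is_ideal I ->
    exists s : seq R, forall x,
      I x <-> exists c : 'I_(size s) -> R, x = \sum_(i < size s) c i * s`_i.

(* local ring: the non-units form an ideal (which is then the unique maximal
   ideal m); R is nontrivial since comUnitRingType is a nonzero ring. *)
Definition local_ring : Prop :=
  forall x y : R, x \isn't a GRing.unit -> y \isn't a GRing.unit ->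
    (x + y) \isn't a GRing.unit.

Definition in_max (x : R) : Prop := x \isn't a GRing.unit.

Definition depth_zero : Prop :=
  forall x : R, in_max x -> exists y : R, y != 0 /\ x * y = 0.

Definition in_socle (x : R) : Prop := forall y : R, in_max y -> y * x = 0.

Definition in_max_pow (s : nat) (x : R) : Prop :=
  exists (k : nat) (c : 'I_k -> R) (a : 'I_k -> 'I_s -> R),
    (forall i j, in_max (a i j)) /\
    x = \sum_(i < k) c i * \prod_(j < s) a i j.

Definition is_cR (s : nat) : Prop :=
  (0 < s)%N /\ (exists x, in_socle x /\ ~ in_max_pow s x) /\
  forall t : nat, (0 < t)%N -> (t < s)%N -> forall x, in_socle x -> in_max_pow t x.

Definition frob (p r : nat) (a : R) : R := a ^+ (p ^ r).

(* A complex L of f.g. free modules, L_i = R^(n i) (row vectors), with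
   differential d i : L_i -> L_(i-1) acting by v |-> v *m d i. *)
Definition is_complex (n : int -> nat) (d : forall i : int, 'M[R]_(n i, n (i - 1))) :=
  forall i : int, d i *m d (i - 1) = 0.

Lemma idx_eq (n : int -> nat) (j : int) : n (j + 1 - 1) = n j.
Proof. by rewrite addrK. Qed.

Definition homology_zero (n : int -> nat) (d : forall i : int, 'M[R]_(n i, n (i - 1)))
  (j : int) : Prop :=
  forall v : 'rV[R]_(n j), v *m d j = 0 ->
    exists w : 'rV[R]_(n (j + 1)), castmx (erefl 1%N, idx_eq n j) (w *m d (j + 1)) = v.

(* base change of the complex along phi^r : L (x)_R ^{phi^r}R has the same
   free modules, differentials with entries a replaced by a^(p^r) *)
Definition frob_complex (p r : nat) (n : int -> nat)
  (d : forall i : int, 'M[R]_(n i, n (i - 1))) : forall i : int, 'M[R]_(n i, n (i - 1)) :=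
  fun i => map_mx (frob p r) (d i).

Definition fin_gen (M : lmodType R) : Prop :=
  exists s : seq M, forall x : M,
    exists c : 'I_(size s) -> R, x = \sum_(i < size s) c i *: s`_i.

Definition projective (M : lmodType R) : Prop :=
  forall (A B : lmodType R) (pi : {linear A -> B}),
    (forall b : B, exists a : A, pi a = b) ->
    forall h : {linear M -> B}, exists g : {linear M -> A}, forall x, pi (g x) = h x.

(* F : ... -> R^(n 1) -> R^(n 0) --eps--> M -> 0, a free resolution of M by
   f.g. free modules, differential d k : R^(n k.+1) -> R^(n k). *)
Definition is_free_resolution (M : lmodType R) (n : nat -> nat)
  (d : forall k : nat, 'M[R]_(n k.+1, n k)) (eps : {linear 'rV[R]_(n 0%N) -> M}) : Prop :=
  [/\ (forall x : M, exists v, eps v = x),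
      (forall v : 'rV[R]_(n 0%N), eps v = 0 <-> exists w, w *m d 0%N = v) &
      (forall k (v : 'rV[R]_(n k.+1)), v *m d k = 0 <-> exists w, w *m d k.+1 = v)].

(* Tor_j^R(M, ^{phi^r}R) = 0, computed as H_j(F (x)_R ^{phi^r}R) for a free
   resolution F of M by f.g. free modules *)
Definition tor_frob_zero (p r : nat) (M : lmodType R) (j : nat) : Prop :=
  exists (n : nat -> nat) (d : forall k : nat, 'M[R]_(n k.+1, n k))
         (eps : {linear 'rV[R]_(n 0%N) -> M}),
    is_free_resolution d eps /\
    match j with
    | 0%N => forall v : 'rV[R]_(n 0%N), exists w, w *m map_mx (frob p r) (d 0%N) = v
    | k.+1 => forall v : 'rV[R]_(n k.+1), v *m map_mx (frob p r) (d k) = 0 ->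
                exists w, w *m map_mx (frob p r) (d k.+1) = v
    end.

End CommAlg.

From HB Require Import structures.
From mathcomp Require Import all_boot all_order all_algebra all_fingroup.
Import Order.TTheory GRing.Theory Num.Theory.
Set Implicit Arguments. Unset Strict Implicit. Unset Printing Implicit Defensive.
Local Open Scope ring_scope.

(* Over the local ring R every matrix is equivalent to [1_r] joined block
   diagonally with a residual block with entries in m, and it is von Neumann
   regular exactly when the residual block vanishes.  Let z be a socle element
   outside m^c.  As p^r >= c, z is not in the ideal generated by the p^r-th
   powers of elements of m, so for a complex L with differentials in m the
   cycle z e_k of L (x) ^{phi^r}R is never a boundary: this is the first claim.
   For the second, take a free resolution F of M.  If Tor_j vanishes, the same
   obstruction together with Nakayama's lemma shows that the differential
   leaving F_j is regular.  Regularity then propagates down the exact complex F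
   (here only z <> 0 is used) to F_1 -> F_0, so M is a direct summand of F_0. *)

Lemma block_mx_schur (R : comUnitRingType) k m n (a : 'M[R]_k) (u : 'M_(k, n))
    (v : 'M_(m, k)) (D : 'M_(m, n)) :
  a \in unitmx ->
  block_mx a u v D =
    block_mx 1%:M 0 (v *m invmx a) 1%:M *m block_mx a u 0 (D - v *m invmx a *m u).
Proof.
move=> a_unit; rewrite mulmx_block !mul1mx !mul0mx !addr0.
by rewrite mulmxKV // addrC subrK.
Qed.

Section LocalRing.
Variable R : comUnitRingType.
Hypothesis loc : local_ring R.

Lemma in_max0 : in_max (0 : R).
Proof. by rewrite /in_max unitr0. Qed.

Lemma in_max1 : ~ in_max (1 : R).
Proof. by rewrite /in_max unitr1. Qed.

Lemma in_maxD (x y : R) : in_max x -> in_max y -> in_max (x + y).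
Proof. exact: loc. Qed.

Lemma in_maxN (x : R) : in_max x -> in_max (- x).
Proof. by rewrite /in_max unitrN. Qed.

Lemma in_maxMr (a x : R) : in_max x -> in_max (x * a).
Proof. by rewrite /in_max unitrM => /negbTE ->. Qed.

Lemma in_max_sum (I : Type) (s : seq I) (P : pred I) (F : I -> R) :
  (forall i, P i -> in_max (F i)) -> in_max (\sum_(i <- s | P i) F i).
Proof.
by move=> FP; elim/big_rec: _ => [|i x Pi]; [exact: in_max0 | apply/in_maxD/FP].
Qed.

Lemma unitr_1sub (x : R) : in_max x -> (1 - x) \is a GRing.unit.
Proof.
move=> x_m; apply/negP => /negP u; apply: in_max1.
by rewrite -(subrK x 1); apply: in_maxD.
Qed.

Definition mx_in_max m n (A : 'M[R]_(m, n)) := forall i j, in_max (A i j).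
Arguments mx_in_max {m n}.

Lemma mx_in_max_mull m n q (A : 'M[R]_(m, n)) (B : 'M_(n, q)) :
  mx_in_max A -> mx_in_max (A *m B).
Proof. by move=> Am i j; rewrite mxE; apply: in_max_sum => k _; apply: in_maxMr. Qed.

Lemma mx_in_maxD m n (A B : 'M[R]_(m, n)) :
  mx_in_max A -> mx_in_max B -> mx_in_max (A + B).
Proof. by move=> Am Bm i j; rewrite mxE; apply: in_maxD. Qed.

Lemma mx_in_maxN m n (A : 'M[R]_(m, n)) : mx_in_max A -> mx_in_max (- A).
Proof. by move=> Am i j; rewrite mxE; apply: in_maxN. Qed.

Lemma unitmx_1sub n (K : 'M[R]_n) : mx_in_max K -> (1%:M - K) \in unitmx.
Proof.
elim: n K => [|n IHn] K Km; first by rewrite unitmxE det_mx00 unitr1.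
rewrite -[n.+1]/(1 + n)%N in K Km *; rewrite -[K]submxK.
set a := ulsubmx K; set u := ursubmx K; set v := dlsubmx K; set D := drsubmx K.
have a1_unit : (1%:M - a) \in unitmx.
  by rewrite unitmxE det_mx11 !mxE unitr_1sub // /a /ulsubmx !mxE.
have schur_m : mx_in_max (D + v *m invmx (1%:M - a) *m u).
  apply: mx_in_maxD; first by move=> i j; rewrite /D !mxE.
  by do 2 apply: mx_in_max_mull; move=> i j; rewrite /v !mxE.
rewrite (scalar_mx_block 1 n 1) opp_block_mx add_block_mx !(add0r, oppr0).
rewrite block_mx_schur // unitmx_mul unitmxE det_lblock !det1 mulr1 unitr1 /=.
rewrite unitmxE det_ublock unitrM -!unitmxE a1_unit /= !mulNmx mulmxN opprK.
by rewrite -addrA -opprD IHn.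
Qed.

Lemma mx_nakayama n q (K : 'M[R]_n) (N : 'M_(n, q)) :
  mx_in_max K -> N = K *m N -> N = 0.
Proof.
move=> Km NKN; have: (1%:M - K) *m N = 0 by rewrite mulmxBl mul1mx -NKN subrr.
by move/(congr1 (mulmx (invmx (1%:M - K)))); rewrite mulKmx ?unitmx_1sub ?mulmx0.
Qed.

Definition normal_form m n r (B : 'M[R]_(m, n)) :=
  forall (i : 'I_m) (j : 'I_n),
    if (i < r)%N || (j < r)%N then B i j = (i == j :> nat)%:R else in_max (B i j).
Arguments normal_form {m n}.

Lemma split1P m (i : 'I_(1 + m)) : i = lshift m 0 \/ exists k, i = rshift 1 k.
Proof.
case: i => [[|k] lt_k]; first by left; apply: val_inj.
by right; exists (Ordinal (lt_k : (k < m)%N)); apply: val_inj.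
Qed.

Lemma normal_form_block m n r (B : 'M[R]_(m, n)) :
  normal_form r B -> normal_form r.+1 (block_mx 1%:M 0 0 B : 'M_(1 + m, 1 + n)).
Proof.
move=> nfB i j; have [->|[k ->]] := split1P i; have [->|[l ->]] := split1P j.
- by rewrite block_mxEul !mxE.
- by rewrite block_mxEur !mxE.
- by rewrite block_mxEdl !mxE orbT.
by rewrite block_mxEdr /= !ltnS eqSS; apply: nfB.
Qed.

Lemma tperm_mxK n (i j : 'I_n) : tperm_mx i j *m tperm_mx i j = 1%:M :> 'M[R]_n.
Proof. by rewrite -perm_mxM tperm2 perm_mx1. Qed.

Lemma mx_normal_form m n (A : 'M[R]_(m, n)) :
  exists (L : 'M_m) (U : 'M_n) (r : nat) (B : 'M_(m, n)),
  [/\ L \in unitmx, U \in unitmx, A = L *m B *m U, (r <= m)%N && (r <= n)%N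
    & normal_form r B].
Proof.
have trivial_nf k l (X : 'M[R]_(k, l)) : mx_in_max X -> exists L U r B,
    [/\ L \in unitmx, U \in unitmx, X = L *m B *m U, (r <= k)%N && (r <= l)%N
      & normal_form r B].
  by move=> Xm; exists 1%:M, 1%:M, 0%N, X; rewrite !unitmx1 mul1mx mulmx1.
elim: m n A => [|m IHm] n A; first by apply: trivial_nf => - [].
case: n A => [|n] A; first by apply: trivial_nf => ? [].
have [/existsP[[i0 j0] /= pivot]|/existsPn no_pivot] :=
  boolP [exists ij : 'I_m.+1 * 'I_n.+1, A ij.1 ij.2 \is a GRing.unit]; last first.
  by apply: trivial_nf => i j; apply: no_pivot (i, j).
pose Tr : 'M[R]_(1 + m) := tperm_mx i0 0; pose Tc : 'M[R]_(1 + n) := tperm_mx j0 0.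
pose A1 : 'M[R]_(1 + m, 1 + n) := Tr *m A *m Tc.
have -> : A = Tr *m A1 *m Tc.
  by rewrite /A1 !mulmxA tperm_mxK mul1mx -mulmxA tperm_mxK mulmx1.
have a_unit : ulsubmx A1 \in unitmx.
  rewrite unitmxE det_mx11 /A1 -xcolE -xrowE !mxE.
  have -> : lshift m (0 : 'I_1) = 0 by apply: val_inj.
  have -> : lshift n (0 : 'I_1) = 0 by apply: val_inj.
  by rewrite !tpermR.
rewrite -(submxK A1); move: (ulsubmx A1) a_unit (ursubmx A1) (dlsubmx A1) (drsubmx A1).
move=> a a_unit u v D {A1 pivot}.
have [L [U [r [B [L_unit U_unit DLBU /andP[rm rn] nfB]]]]] :=
  IHm n (D - v *m invmx a *m u).
exists (Tr *m (block_mx 1%:M 0 (v *m invmx a) 1%:M *m block_mx 1%:M 0 0 L)).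
exists (block_mx a u 0 U *m Tc), r.+1, (block_mx 1%:M 0 0 B : 'M_(1 + m, 1 + n)).
split.
- rewrite !unitmx_mul unitmx_perm !unitmxE !(@det_lblock _ 1) !det1 !mul1r.
  by rewrite unitr1 -unitmxE.
- rewrite unitmx_mul unitmx_perm unitmxE (@det_ublock _ 1) unitrM -!unitmxE.
  by rewrite a_unit U_unit.
- rewrite (block_mx_schur u v D a_unit) DLBU !mulmxA.
  congr (_ *m _); rewrite -!mulmxA; congr (_ *m (_ *m _)).
  rewrite (mulmx_block (1%:M : 'M_1)) (mulmx_block (1%:M : 'M_1)).
  by rewrite !(mul1mx, mul0mx, mulmx0, addr0, add0r).
- by rewrite !ltnS rm rn.
exact: normal_form_block.
Qed.

Lemma pid_mulmxE m n r (A : 'M[R]_(m, n)) i j :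
  (pid_mx r *m A) i j = if (i < r)%N then A i j else 0.
Proof.
rewrite mxE (bigD1 i) //= big1 => [|k /negbTE ki]; last first.
  by rewrite mxE (inj_eq val_inj) eq_sym ki mul0r.
by rewrite mxE eqxx addr0; case: ifP; rewrite ?mul1r ?mul0r.
Qed.

Lemma mulmx_pidE m n r (A : 'M[R]_(m, n)) i j :
  (A *m pid_mx r) i j = if (j < r)%N then A i j else 0.
Proof.
rewrite mxE (bigD1 j) //= big1 => [|k /negbTE kj]; last first.
  by rewrite mxE (inj_eq val_inj) kj mulr0.
by rewrite mxE eqxx addr0; case: ifP; rewrite ?mulr1 ?mulr0.
Qed.

Lemma copid_mulmxE m n r (A : 'M[R]_(m, n)) i j :
  (copid_mx r *m A) i j = if (r <= i)%N then A i j else 0.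
Proof.
rewrite mulmxBl mul1mx mxE [(- (_ : 'M_(_, _))) _ _]mxE pid_mulmxE.
by case: ltnP; rewrite ?subrr ?subr0.
Qed.

Lemma mulmx_copidE m n r (A : 'M[R]_(m, n)) i j :
  (A *m copid_mx r) i j = if (r <= j)%N then A i j else 0.
Proof.
rewrite mulmxBr mulmx1 mxE [(- (_ : 'M_(_, _))) _ _]mxE mulmx_pidE.
by case: ltnP; rewrite ?subrr ?subr0.
Qed.

Lemma normal_form_col_in_max m n r (B : 'M[R]_(m, n)) (j : 'I_n) :
  normal_form r B -> (r <= j)%N -> forall i, in_max (B i j).
Proof.
move=> nfB rj i; have := nfB i j; rewrite [(j < r)%N]ltnNge rj orbF.
by case: ltnP => // ir ->; rewrite ltn_eqF ?(leq_trans ir rj) //; apply: in_max0.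
Qed.

Lemma normal_form_row_in_max m n r (B : 'M[R]_(m, n)) (i : 'I_m) :
  normal_form r B -> (r <= i)%N -> mx_in_max (row i B).
Proof.
move=> nfB ri k j; have := nfB i j; rewrite mxE [(i < r)%N]ltnNge ri /=.
by case: ltnP => // jr ->; rewrite gtn_eqF ?(leq_trans jr ri) //; apply: in_max0.
Qed.

Lemma normal_form_copid m n r (B : 'M[R]_(m, n)) :
  normal_form r B -> B *m copid_mx r = copid_mx r *m B *m copid_mx r.
Proof.
move=> nfB; apply/matrixP => i j; rewrite !mulmx_copidE copid_mulmxE.
case: leqP => // rj; case: leqP => // ir; have := nfB i j; rewrite ir => ->.
by rewrite ltn_eqF ?(leq_trans ir rj).
Qed.

Lemma normal_form_mull_eq0 m n q r (B : 'M[R]_(m, n)) (X : 'M_(n, q)) :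
  normal_form r B -> (r <= m)%N -> B *m X = 0 -> (pid_mx r : 'M_n) *m X = 0.
Proof.
move=> nfB rm BX0; apply/matrixP => k j; rewrite pid_mulmxE mxE.
case: ltnP => // kr; pose k' : 'I_m := Ordinal (leq_trans kr rm).
have := congr1 (fun M : 'M_(m, q) => M k' j) BX0; rewrite !mxE => <-.
rewrite (bigD1 k) //= big1 ?addr0 => [|l lk].
  by have := nfB k' k; rewrite /= kr => ->; rewrite eqxx mul1r.
have := nfB k' l; rewrite /= kr => ->.
by rewrite eq_sym -[_ == _]/(l == k) (negbTE lk) mul0r.
Qed.

(* von Neumann regularity; for a presentation matrix it makes the cokernel a
   direct summand of a free module. *)
Definition regmx m n (A : 'M[R]_(m, n)) := exists Q : 'M_(n, m), A *m Q *m A = A.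
Arguments regmx {m n}.

Lemma regmx_pid m n r (L : 'M[R]_m) (U : 'M_n) :
  L \in unitmx -> U \in unitmx -> (r <= m)%N -> (r <= n)%N ->
  regmx (L *m pid_mx r *m U).
Proof.
move=> L_unit U_unit rm rn; exists (invmx U *m pid_mx r *m invmx L).
rewrite !mulmxA mulmxK // mulmxKV // -(mulmxA L) mul_pid_mx -(mulmxA L) mul_pid_mx.
by rewrite !minnn (minn_idPr rn) minnn (minn_idPr rm).
Qed.

Lemma regmx_normal_form m n r (L : 'M[R]_m) (U : 'M_n) (B : 'M_(m, n)) :
  L \in unitmx -> U \in unitmx -> (r <= m)%N && (r <= n)%N -> normal_form r B ->
  copid_mx r *m B *m copid_mx r = 0 -> regmx (L *m B *m U).
Proof.
move=> L_unit U_unit /andP[rm rn] nfB N0.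
suff -> : B = pid_mx r by apply: regmx_pid.
apply/matrixP => i j; rewrite mxE; have := nfB i j.
case: (ltnP i r) => [ir|ri] /=; first by move=> ->; rewrite andbT.
case: (ltnP j r) => [jr|rj] /=.
  by move=> ->; rewrite andbF gtn_eqF ?(leq_trans jr ri).
move=> _; rewrite andbF; have := congr1 (fun M : 'M_(m, n) => M i j) N0.
by rewrite mulmx_copidE copid_mulmxE ri rj mxE.
Qed.

Lemma socle_scale_mx m n (z : R) (X : 'M[R]_(m, n)) :
  in_socle z -> mx_in_max X -> z *: X = 0.
Proof. by move=> zs Xm; apply/matrixP => i j; rewrite !mxE mulrC zs. Qed.

Lemma in_max_annihilated (z x : R) : z != 0 -> z * x = 0 -> in_max x.
Proof.
move=> z_neq0 zx0; apply/negP => x_unit; move/eqP: z_neq0; apply.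
by rewrite -(mulrK x_unit z) zx0 mul0r.
Qed.

(* For i outside the pivot rows, [z] times the i-th basis vector (in the basis
   given by [L]) is a cycle, hence a boundary, hence fixed by the idempotent
   [Q *m D1]; as [z != 0] annihilates nothing outside m, the i-th row of
   [E - 1] lies in m, and Nakayama kills the residual block. *)
Lemma regmx_exact (z : R) m n q (D1 : 'M[R]_(m, n)) (D0 : 'M_(n, q)) :
  in_socle z -> z != 0 -> regmx D1 -> D1 *m D0 = 0 ->
  (forall v : 'rV_n, v *m D0 = 0 -> exists w : 'rV_m, w *m D1 = v) ->
  regmx D0.
Proof.
move=> zs z_neq0 [Q D1QD1] D1D0 exact0.
have [L [U [r [B [L_unit U_unit D0E rmn nfB]]]]] := mx_normal_form D0.
pose E := invmx L *m (Q *m D1) *m L.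
have EB : E *m B = 0.
  have LB : L *m B = D0 *m invmx U by rewrite D0E mulmxK.
  by rewrite /E -mulmxA LB -!mulmxA (mulmxA D1) D1D0 mul0mx !mulmx0.
have E1_m (i j : 'I_n) : (r <= i)%N -> in_max ((E - 1%:M) i j).
  move=> ri; pose v : 'rV_n := z *: (delta_mx 0 i *m invmx L).
  have [|w wD1] := exact0 v.
    rewrite -scalemxAl D0E !mulmxA mulmxKV // -rowE.
    apply: socle_scale_mx => //; apply: mx_in_max_mull.
    exact: normal_form_row_in_max nfB ri.
  have : v *m (Q *m D1) = v by rewrite -wD1 -mulmxA (mulmxA D1) D1QD1.
  move/(congr1 (mulmx^~ L)); rewrite /v -!scalemxAl mulmxKV //.
  rewrite (_ : _ *m _ *m L = delta_mx 0 i *m E).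
    move/matrixP/(_ 0 j); rewrite -!rowE !mxE => zE.
    by apply: (in_max_annihilated z_neq0); rewrite mulrBr zE eqxx eq_sym subrr.
  by rewrite /E !mulmxA.
pose K := copid_mx r *m (E - 1%:M).
have K_m : mx_in_max K.
  by move=> i j; rewrite copid_mulmxE; case: leqP => ri; [apply: E1_m | apply: in_max0].
pose N := copid_mx r *m B *m copid_mx r.
have N0 : N = 0.
  apply: (mx_nakayama (K := - K)); first exact: mx_in_maxN.
  rewrite /N /K mulNmx -(normal_form_copid nfB) !mulmxA -(mulmxA _ (E - 1%:M)).
  by rewrite (mulmxBl E) EB mul1mx sub0r mulmxN mulNmx opprK normal_form_copid.
by rewrite D0E; apply: (regmx_normal_form L_unit U_unit rmn nfB N0).
Qed.

Section LocalEndomorphism.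
Variable f : {rmorphism R -> R}.
Hypothesis f_in_max : forall x, in_max x -> in_max (f x).
Variable z : R.
Hypothesis z_socle : in_socle z.
Hypothesis z_notin_fm : forall k (w a : 'I_k -> R),
  (forall i, in_max (a i)) -> \sum_(i < k) w i * f (a i) != z.

Lemma socle_witness_neq0 : z != 0.
Proof.
by have := @z_notin_fm 0 (fun=> 0) (fun=> 0) (fun=> in_max0); rewrite big_ord0 eq_sym.
Qed.

Lemma map_mx_in_max m n (A : 'M[R]_(m, n)) : mx_in_max A -> mx_in_max (map_mx f A).
Proof. by move=> Am i j; rewrite mxE; apply/f_in_max/Am. Qed.

Lemma mulmx_map_neq_witness a b (D : 'M[R]_(a, b)) (k : 'I_b) (w : 'rV_a) :
  (forall j, in_max (D j k)) -> (w *m map_mx f D) 0 k != z.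
Proof.
move=> Dk_m; rewrite mxE; under eq_bigr do rewrite mxE.
exact: (z_notin_fm (fun j => w 0 j)).
Qed.

Lemma map_homology_zero_eq0 (n : int -> nat)
    (d : forall i : int, 'M[R]_(n i, n (i - 1))) :
  (forall i a b, in_max (d i a b)) ->
  forall j, homology_zero (fun i => map_mx f (d i)) j -> n j = 0%N.
Proof.
move=> d_m j Hj; apply/eqP; rewrite eqn0Ngt; apply/negP => nj_gt0.
pose k : 'I_(n j) := Ordinal nj_gt0.
have [|w /matrixP/(_ 0 k)] := Hj (z *: delta_mx 0 k).
  rewrite -scalemxAl -rowE -map_row; apply: socle_scale_mx => //.
  by apply: map_mx_in_max => ? ?; rewrite mxE.
rewrite castmxE cast_ord_id => wz.
have /negP[] :=
  mulmx_map_neq_witness w (fun i => d_m _ i (cast_ord (esym (idx_eq n j)) k)).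
by rewrite wz !mxE !eqxx mulr1.
Qed.

(* Write [G = L *m C *m U] in normal form.  The entries of [invmx U] in the
   non-pivot rows of [B] and the non-pivot columns of [C] lie in m, as
   otherwise exactness would put [z] in the ideal generated by [f] of m.  Since
   the pivot rows of [U *m B] vanish, the residual block of [B] is then
   reproduced by a matrix with entries in m. *)
Lemma map_exact_residual_eq0 a b q r (G : 'M[R]_(a, b)) (B : 'M_(b, q)) :
  normal_form r B -> G *m B = 0 ->
  (forall v : 'rV_b, v *m map_mx f B = 0 -> exists w : 'rV_a, w *m map_mx f G = v) ->
  copid_mx r *m B *m copid_mx r = 0.
Proof.
move=> nfB GB0 exactB.
have [L [U [s [C [L_unit U_unit GE /andP[sa sb] nfC]]]]] := mx_normal_form G.
pose W := invmx U.
have W_m (i k : 'I_b) : (r <= i)%N -> (s <= k)%N -> in_max (W i k).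
  move=> ri sk; have [|w wG] := exactB (z *: delta_mx 0 i).
    rewrite -scalemxAl -rowE -map_row; apply: socle_scale_mx => //.
    exact/map_mx_in_max/(normal_form_row_in_max nfB ri).
  have : z *: (delta_mx 0 i *m map_mx f W) = w *m map_mx f L *m map_mx f C.
    rewrite scalemxAl -wG GE !map_mxM -!mulmxA -map_mxM mulmxV // map_mx1.
    by rewrite mulmx1 !mulmxA.
  move/matrixP/(_ 0 k); rewrite -rowE mxE [row _ _ _ _]mxE [map_mx _ _ _ _]mxE.
  move=> zfW; apply/negP => W_unit.
  have fW_unit : f (W i k) \is a GRing.unit by rewrite rmorph_unit.
  have /negP[] := mulmx_map_neq_witness ((f (W i k))^-1 *: (w *m map_mx f L))
    (normal_form_col_in_max nfC sk).
  by rewrite -scalemxAl mxE -zfW mulrC mulrK.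
have UB_top : (pid_mx s : 'M_b) *m (U *m B) = 0.
  apply: (normal_form_mull_eq0 nfC sa).
  have : L *m (C *m (U *m B)) = 0 by rewrite !mulmxA -GE GB0.
  by move/(congr1 (mulmx (invmx L))); rewrite mulKmx // mulmx0.
pose K := copid_mx r *m W *m copid_mx s *m U.
have K_m : mx_in_max K.
  apply: mx_in_max_mull => i k; rewrite mulmx_copidE copid_mulmxE.
  case: leqP => sk; last exact: in_max0.
  by case: leqP => ri; [apply: W_m | apply: in_max0].
have KB : copid_mx r *m B = K *m B.
  by rewrite /K -!mulmxA (mulmxBl 1%:M (pid_mx s)) mul1mx UB_top subr0 mulKmx.
apply: (mx_nakayama K_m).
by rewrite -(normal_form_copid nfB) mulmxA -KB normal_form_copid.
Qed.

Lemma regmx_map_exact a b q (D1 : 'M[R]_(a, b)) (D0 : 'M_(b, q)) :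
  D1 *m D0 = 0 ->
  (forall v : 'rV_b, v *m map_mx f D0 = 0 -> exists w : 'rV_a, w *m map_mx f D1 = v) ->
  regmx D0.
Proof.
move=> D1D0 exact0.
have [L [U [r [B [L_unit U_unit D0E rmn nfB]]]]] := mx_normal_form D0.
rewrite D0E; apply: (regmx_normal_form L_unit U_unit rmn nfB).
apply: (map_exact_residual_eq0 (G := D1 *m L) nfB).
  by rewrite -mulmxA -(mulmxK U_unit (L *m B)) -D0E mulmxA D1D0 mul0mx.
move=> v vB0; have [|w wD1] := exact0 (v *m map_mx f (invmx L)).
  rewrite D0E !map_mxM !mulmxA -(mulmxA v) -map_mxM mulVmx // map_mx1 mulmx1.
  by rewrite vB0 mul0mx.
exists w; rewrite map_mxM mulmxA wD1 -mulmxA -map_mxM mulVmx // map_mx1.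
by rewrite mulmx1.
Qed.

End LocalEndomorphism.

Lemma mulmx_eq0_of_exact m n q (D1 : 'M[R]_(m, n)) (D0 : 'M_(n, q)) :
  (forall v : 'rV_n, v *m D0 = 0 <-> exists w, w *m D1 = v) -> D1 *m D0 = 0.
Proof.
move=> exact0; apply/row_matrixP => l; rewrite row_mul row0.
by apply/exact0; exists (delta_mx 0 l); rewrite rowE.
Qed.

Lemma regmx_resolution0 (z : R) (n : nat -> nat) (d : forall k, 'M[R]_(n k.+1, n k)) :
  in_socle z -> z != 0 ->
  (forall k (v : 'rV_(n k.+1)), v *m d k = 0 <-> exists w, w *m d k.+1 = v) ->
  forall k, regmx (d k) -> regmx (d 0%N).
Proof.
move=> zs z_neq0 exact_d; elim=> // k IHk reg_dk1; apply: IHk.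
apply: (regmx_exact zs z_neq0 reg_dk1); last by move=> v /exact_d.
exact: mulmx_eq0_of_exact.
Qed.

End LocalRing.

Section Presentation.
Variables (R : comUnitRingType) (M : lmodType R).

Lemma linear_section_of_regmx n0 n1 (d0 : 'M[R]_(n1, n0))
    (eps : {linear 'rV[R]_n0 -> M}) :
  regmx d0 -> (forall x, exists v, eps v = x) ->
  (forall v, eps v = 0 <-> exists w, w *m d0 = v) ->
  exists s : {linear M -> 'rV[R]_n0}, forall x, eps (s x) = x.
Proof.
move=> [Q d0Qd0] eps_surj eps_ker; pose P := 1%:M - Q *m d0.
have kerP v : eps v = 0 -> v *m P = 0.
  by case/eps_ker => w <-; rewrite mulmxBr mulmx1 -mulmxA (mulmxA d0) d0Qd0 subrr.
have epsP v : eps (v *m P) = eps v.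
  apply/eqP; rewrite -subr_eq0 -linearB /= mulmxBr mulmx1 addrAC subrr add0r.
  by apply/eqP/eps_ker; exists (- (v *m Q)); rewrite mulNmx mulmxA.
have pre x : exists v, eps v == x by have [v <-] := eps_surj x; exists v.
pose s x := xchoose (pre x) *m P.
have sK x : eps (s x) = x by rewrite epsP; apply/eqP/(xchooseP (pre x)).
have s_linear : linear s.
  move=> a x y; apply/eqP; rewrite -subr_eq0 /s scalemxAl -mulmxDl -mulmxBl.
  apply/eqP/kerP; rewrite linearB linearP /=.
  by rewrite !(eqP (xchooseP (pre _))) subrr.
pose sL : {linear M -> 'rV[R]_n0} := HB.pack s (GRing.isLinear.Build _ _ _ _ s s_linear).
by exists sL.
Qed.

Lemma projective_of_retract n (s : {linear M -> 'rV[R]_n})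
    (eps : {linear 'rV[R]_n -> M}) :
  (forall x, eps (s x) = x) -> projective M.
Proof.
move=> sK A B pi pi_surj h.
have pre i : exists a : A, pi a == h (eps (delta_mx 0 i)).
  by have [a pa] := pi_surj (h (eps (delta_mx 0 i))); exists a; apply/eqP.
pose g x := \sum_i s x 0 i *: xchoose (pre i).
have g_linear : linear g.
  move=> c x y; rewrite /g scaler_sumr -big_split; apply: eq_bigr => i _.
  by rewrite linearP !mxE scalerA scalerDl.
pose gL : {linear M -> A} := HB.pack g (GRing.isLinear.Build _ _ _ _ g g_linear).
exists gL => x /=.
rewrite linear_sum -[in RHS](sK x) [s x in RHS]row_sum_delta !linear_sum.
by apply: eq_bigr => i _; rewrite !linearZ /= (eqP (xchooseP (pre i))).
Qed.

End Presentation.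

Section Frobenius.
Variables (R : comUnitRingType) (p r : nat).

Lemma frob_is_nmod_morphism : p \in [pchar R] -> GRing.nmod_morphism (frob p r : R -> R).
Proof.
move=> pc; have p_prime := pcharf_prime pc.
split=> [|x y]; first by rewrite /frob expr0n eqn0Ngt expn_gt0 prime_gt0.
by rewrite /frob exprDn_pchar // pnatX pnatE // pc.
Qed.

Lemma frob_is_monoid_morphism : GRing.monoid_morphism (frob p r : R -> R).
Proof. by split=> [|x y]; rewrite /frob ?expr1n ?exprMn. Qed.

Definition frob_rmorphism (pc : p \in [pchar R]) : {rmorphism R -> R} :=
  HB.pack (frob p r : R -> R)
    (GRing.isNmodMorphism.Build R R _ (frob_is_nmod_morphism pc))
    (GRing.isMonoidMorphism.Build R R _ frob_is_monoid_morphism).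

Lemma frob_in_max (x : R) : (0 < p ^ r)%N -> in_max x -> in_max (frob p r x).
Proof. by move=> pr_gt0; rewrite /in_max /frob unitrX_pos. Qed.

Lemma frob_ideal_notin c (z : R) : (c <= p ^ r)%N -> ~ in_max_pow c z ->
  forall k (w a : 'I_k -> R), (forall i, in_max (a i)) ->
  \sum_(i < k) w i * frob p r (a i) != z.
Proof.
move=> c_le z_notin k w a a_m; apply/eqP => zE; apply: z_notin; rewrite -zE.
exists k, (fun i => w i * a i ^+ (p ^ r - c)), (fun i _ => a i); split=> //.
by apply: eq_bigr => i _; rewrite prodr_const card_ord -mulrA -exprD subnK.
Qed.

End Frobenius.

Lemma homology_zero_of_eq0 (R : comUnitRingType) (n : int -> nat)
    (d : forall i : int, 'M[R]_(n i, n (i - 1))) j :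
  n j = 0%N -> homology_zero d j.
Proof.
by move=> nj0 v _; exists 0; apply/matrixP => ? k; move: (ltn_ord k); rewrite {2}nj0.
Qed.

Theorem proposition1p3 (R : comUnitRingType) (p : nat) :
  prime p -> p \in [pchar R] ->
  noetherian R -> local_ring R -> depth_zero R ->
  forall (c r : nat), is_cR R c -> (c < p ^ r)%N ->
  (forall (n : int -> nat) (d : forall i : int, 'M[R]_(n i, n (i - 1))),
     is_complex d ->
     (forall (i : int) a b, in_max (d i a b)) ->
     forall j : int, homology_zero (frob_complex p r d) j <-> n j = 0%N)
  /\
  (forall M : lmodType R, fin_gen M ->
     forall j : nat, (1 <= j)%N -> tor_frob_zero p r M j -> projective M).
Proof.
move=> _ pc _ loc _ c r [_ [[z [z_socle z_notin]] _]] c_lt.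
pose f := frob_rmorphism r pc.
have f_in_max x : in_max x -> in_max (f x) by apply/frob_in_max/leq_ltn_trans/c_lt.
have z_notin_fm := frob_ideal_notin (ltnW c_lt) z_notin.
split=> [n d _ d_m j | M _ [|k] // _ [n [d [eps [[eps_surj eps_ker d_exact] tor]]]]].
  split; last exact: homology_zero_of_eq0.
  by move=> H; apply: (map_homology_zero_eq0 f_in_max z_socle z_notin_fm d_m H).
have reg_dk : regmx (d k).
  apply: (regmx_map_exact loc f_in_max z_socle z_notin_fm _ tor).
  exact/mulmx_eq0_of_exact/d_exact.
have z_neq0 := socle_witness_neq0 (f := f) z_notin_fm.
have reg_d0 := regmx_resolution0 loc z_socle z_neq0 d_exact reg_dk.
have [s sK] := linear_section_of_regmx reg_d0 eps_surj eps_ker.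
exact: projective_of_retract sK.
Qed.
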